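(* Let $H:\mathbb{R}\to\mathbb{R}$ be a smooth, bounded function with $H(-s)=H(s)\ge 0$ for all $s$, $\int_0^{+\infty} sH(s)\,ds=1$, and such that $H$ either has compact support or $H$ and all its derivatives decay sufficiently fast as $|s|\to\infty$. Let $\zeta:\mathbb{R}\to\mathbb{R}$ be uniformly bounded and smooth with bounded derivative on $\mathbb{R}$, with $\min_{x\in\mathbb{R}}\zeta(x)=\delta_m>0$. Define $\gamma(s,x)=\zeta(x)^{-2}H(s/\zeta(x))$ and $k(x)=\int_0^{+\infty}\gamma(s,x)\,ds$. Let $\psi_0$ be continuous and uniformly bounded on $\mathbb{R}$, piecewise smooth, with a piecewise bounded derivative $\psi_{0x}$ having only finitely many jump discontinuities. Let $u=u(x,t)$ be the solution of $$u_t(x,t)+\int_0^{+\infty}\big[u(x,t)-u(x-s,t)\big]\gamma(s,x)\,ds=0,\quad x\in\mathbb{R},\ t>0,\qquad u(x,0)=\psi_0(x).$$ Then for all $t\in\mathbb{R}^+$ and $x\in\mathbb{R}$, $$[u_x](x,t)=e^{-k(x)t}[u_x](x,0)=e^{-k(x)t}[\psi_{0x}](x).$$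
   Context: For a function $f$ of $x$, $[f](x)=f(x^+)-f(x^-)$ denotes the jump of $f$ at $x$ (difference of right and left limits); $[u_x](x,t)$ is the jump in $x$ of the spatial derivative $u_x(\cdot,t)$. The equation is a nonlocal analogue of $u_t+u_x=0$ with an upwind nonlocal derivative and spatially varying horizon $\zeta(x)$; note $k(x)=\zeta(x)^{-1}\int_0^{+\infty}yH(y)\,dy$. *)

From Stdlib Require Import Reals List.
From Coquelicot Require Import Coquelicot.
Open Scope R_scope.

Definition is_jump (f : R -> R) (x j : R) : Prop :=
  exists l r : R,
    filterlim f (at_left x) (locally l) /\
    filterlim f (at_right x) (locally r) /\
    j = r - l.

Definition int0inf (f : R -> R) : R :=
  RInt_gen f (at_point 0) (Rbar_locally p_infty).

Definition gamma (H zeta : R -> R) (s x : R) : R :=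
  / (zeta x) ^ 2 * H (s / zeta x).

Definition kfun (H zeta : R -> R) (x : R) : R :=
  int0inf (fun s => gamma H zeta s x).

Definition smooth (f : R -> R) : Prop := forall n x, ex_derive_n f n x.

Definition bdd_fun (f : R -> R) : Prop := exists M, forall x, Rabs (f x) <= M.

From Stdlib Require Import Reals List Lra Psatz.
From Coquelicot Require Import Coquelicot.
Open Scope R_scope.

(* Put [K = kfun H zeta] and [L u (x, t) = int_0^oo u (x - s, t) gamma (s, x) ds].
   The equation reads [u_t + K u = L u], so by Duhamel's formula
     u (x, t) = exp (- K x * t) * (psi0 x + V x),
       V x = int_0^t exp (K x * tau) * L u (x, tau) dtau.
   Although [u] is only continuous in [x], [L u] is C^1 in [x]: after substituting [z = x - s],
   [x] only appears in the kernel [gamma (x - z, x)] and in the limits of integration.  Hence [V]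
   is C^1, and by the product rule the only part of [u_x] that can jump is
   [exp (- K x * t) * psi0_x], whose jump is [exp (- K x * t) * [psi0_x] (x)].
   To differentiate [V] under the improper integral, [L] is truncated at [s = n + 1]; the
   [1 / (1 + s^2)] decay of [gamma] and of its derivative (inherited from [H]) makes the truncated
   [V_n] and their derivatives converge uniformly at rate [O(1/n)].  Finally [K = c / zeta] with
   [c = int_0^oo H] by scaling, so [K] is C^1 with bounded derivative. *)

Definition is_C1 (f : R -> R) : Prop :=
  forall y, ex_derive f y /\ continuity_pt (Derive f) y.

Lemma locally_not_In (l : list R) (x : R) :
  locally x (fun y => y <> x -> ~ In y l).
Proof.
  induction l as [|a l IH]; simpl.
  - apply filter_forall; intros y _ [].
  - destruct (Req_dec a x) as [<- | Hax].
    + revert IH; apply filter_imp; intros y Hy Hya [E | Hin].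
      * exact (Hya (eq_sym E)).
      * exact (Hy Hya Hin).
    + assert (Hd : 0 < Rabs (a - x)) by (apply Rabs_pos_lt; lra).
      generalize (filter_and _ _ IH (locally_ball x (mkposreal _ Hd))).
      apply filter_imp; intros y [Hy Hb] Hyx [E | Hin].
      * subst y. change (Rabs (a - x) < Rabs (a - x)) in Hb. lra.
      * exact (Hy Hyx Hin).
Qed.

Lemma filterlim_abs_le {T} (F : (T -> Prop) -> Prop) {FF : ProperFilter F}
  (g : T -> R) (l E : R) :
  filterlim g F (locally l) -> F (fun x => Rabs (g x) <= E) -> Rabs l <= E.
Proof.
  intros Hg HE.
  destruct (Rle_dec (Rabs l) E) as [h | h]; [exact h | exfalso].
  assert (He : 0 < Rabs l - E) by lra.
  assert (Hnear : F (fun x => ball l (mkposreal _ He) (g x)))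
    by exact (Hg _ (locally_ball l (mkposreal _ He))).
  destruct (filter_ex _ (filter_and _ _ HE Hnear)) as [z [Hz Hball]].
  change (Rabs (g z - l) < Rabs l - E) in Hball.
  pose proof (Rabs_triang_inv l (g z)). rewrite Rabs_minus_sym in Hball. lra.
Qed.

Lemma abs_RInt_le_inv_sq (f : R -> R) (a b B : R) :
  1 <= a <= b -> ex_RInt f a b ->
  (forall s, a <= s <= b -> Rabs (f s) <= B / (1 + s ^ 2)) ->
  Rabs (RInt f a b) <= B / a.
Proof.
  intros Hab Hf HB.
  assert (HB0 : 0 <= B).
  { specialize (HB a ltac:(lra)). pose proof (Rabs_pos (f a)).
    apply Rmult_le_reg_r with (/ (1 + a ^ 2)); [apply Rinv_0_lt_compat; nra | lra]. }
  assert (Hg : is_RInt (fun s => B / s ^ 2) a b (B / a - B / b)).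
  { replace (B / a - B / b) with (minus (- B / b) (- B / a))
      by (unfold minus, plus, opp; simpl; field; lra).
    apply (is_RInt_derive (fun s => - B / s)).
    - intros s Hs. rewrite Rmin_left, Rmax_right in Hs by lra.
      auto_derive; [lra | field; lra].
    - intros s Hs. rewrite Rmin_left, Rmax_right in Hs by lra.
      apply continuity_pt_filterlim, derivable_continuous_pt.
      apply derivable_pt_div; [apply derivable_pt_const | apply derivable_pt_pow | simpl; nra]. }
  assert (B / b >= 0) by (apply Rle_ge, Rdiv_le_0_compat; lra).
  apply Rle_trans with (B / a - B / b); [|lra].
  apply (norm_RInt_le f (fun s => B / s ^ 2) a b);
    [lra | | exact (RInt_correct f a b Hf) | exact Hg].
  intros s Hs. eapply Rle_trans; [apply HB; exact Hs|].
  apply Rmult_le_compat_l; [lra|]. apply Rinv_le_contravar; nra.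
Qed.

Lemma is_RInt_gen_of_filterlim (f : R -> R) (l : R) :
  (forall b, ex_RInt f 0 b) ->
  filterlim (fun b => RInt f 0 b) (Rbar_locally p_infty) (locally l) ->
  is_RInt_gen f (at_point 0) (Rbar_locally p_infty) l.
Proof.
  intros Hex Hlim P HP.
  exists (fun a => a = 0) (fun b => P (RInt f 0 b)); [reflexivity | exact (Hlim P HP) |].
  intros a b -> Hb. exists (RInt f 0 b). split; [exact (RInt_correct f 0 b (Hex b)) | exact Hb].
Qed.

Lemma filterlim_RInt_of_is_RInt_gen (f : R -> R) (l : R) :
  is_RInt_gen f (at_point 0) (Rbar_locally p_infty) l ->
  filterlim (fun b => RInt f 0 b) (Rbar_locally p_infty) (locally l).
Proof.
  intros H P HP.
  destruct (H P HP) as [Qa Qb HQa HQb HQ].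
  unfold filtermap. revert HQb; apply filter_imp; intros b Hb.
  destruct (HQ 0 b HQa Hb) as [y [Hy Py]].
  simpl in Hy. rewrite (is_RInt_unique _ _ _ _ Hy). exact Py.
Qed.

Lemma abs_RInt_gen_sub_RInt_le (f : R -> R) (l N E : R) :
  is_RInt_gen f (at_point 0) (Rbar_locally p_infty) l -> (forall a b, ex_RInt f a b) ->
  (forall b, N <= b -> Rabs (RInt f N b) <= E) -> Rabs (l - RInt f 0 N) <= E.
Proof.
  intros Hl Hex HE.
  apply (filterlim_abs_le (Rbar_locally p_infty) (fun b => RInt f N b));
    [| exists N; intros b Hb; apply HE; lra].
  apply (filterlim_ext (fun b => RInt f 0 b - RInt f 0 N)).
  { intros b. rewrite <- (RInt_Chasles f 0 N b) by auto. unfold plus; simpl; lra. }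
  apply (filterlim_comp _ _ _ (fun b => RInt f 0 b) (fun x => x - RInt f 0 N) _ (locally l));
    [apply filterlim_RInt_of_is_RInt_gen, Hl|].
  apply (proj1 (continuity_pt_filterlim (fun x => x - RInt f 0 N) l)).
  apply continuity_pt_minus;
    [apply continuity_pt_id | apply continuity_pt_const; intros ? ?; reflexivity].
Qed.

Lemma filterlim_RInt_inv_sq_decay (f : R -> R) (B : R) :
  (forall a b, ex_RInt f a b) ->
  (forall s, 0 <= s -> Rabs (f s) <= B / (1 + s ^ 2)) ->
  exists l, filterlim (fun b => RInt f 0 b) (Rbar_locally p_infty) (locally l).
Proof.
  intros Hex HB.
  assert (Htail : forall a b, 1 <= a <= b -> Rabs (RInt f 0 b - RInt f 0 a) <= B / a).
  { intros a b Hab.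
    replace (RInt f 0 b - RInt f 0 a) with (RInt f a b)
      by (rewrite <- (RInt_Chasles f 0 a b) by auto; unfold plus; simpl; lra).
    apply abs_RInt_le_inv_sq; auto. intros s Hs; apply HB; lra. }
  apply (filterlim_locally_cauchy (F := Rbar_locally p_infty)).
  intros eps. pose proof (cond_pos eps) as Heps.
  set (N := Rmax 1 (B / eps)).
  assert (HN : forall a, N < a -> 1 <= a /\ B / a < eps).
  { intros a Ha. assert (1 <= N) by apply Rmax_l. assert (B / eps <= N) by apply Rmax_r.
    split; [lra|]. apply Rlt_div_l; [lra|].
    assert (HBa : B / eps < a) by lra. apply (Rlt_div_l _ _ _ Heps) in HBa. nra. }
  exists (fun b => N < b). split; [exists N; auto|].
  intros a b Ha Hb. change (Rabs (RInt f 0 b - RInt f 0 a) < eps).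
  destruct (HN a Ha), (HN b Hb), (Rle_dec a b).
  - eapply Rle_lt_trans; [apply Htail; lra | assumption].
  - rewrite Rabs_minus_sym. eapply Rle_lt_trans; [apply Htail; lra | assumption].
Qed.

Lemma div_succ_le (C : R) (n m : nat) :
  0 <= C -> (n <= m)%nat -> C / (INR m + 1) <= C / (INR n + 1).
Proof.
  intros HC Hnm. apply le_INR in Hnm. pose proof (pos_INR n).
  apply Rmult_le_compat_l; [exact HC|]. apply Rinv_le_contravar; lra.
Qed.

Lemma eventually_div_succ_lt (C eps : R) :
  0 <= C -> 0 < eps -> exists N, forall n, (N <= n)%nat -> C / (INR n + 1) < eps.
Proof.
  intros HC Heps.
  destruct (nfloor_ex (C / eps)) as [N [_ HN]]; [apply Rdiv_le_0_compat; lra|].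
  exists N. intros n Hn.
  eapply Rle_lt_trans; [apply div_succ_le; eassumption|].
  pose proof (pos_INR N). apply (Rlt_div_l _ _ _ Heps) in HN.
  apply Rlt_div_l; lra.
Qed.

Lemma nonneg_of_abs_le_div_succ (u : nat -> R) (C : R) :
  (forall n, Rabs (u n) <= C / (INR n + 1)) -> 0 <= C.
Proof.
  intros H. specialize (H O). simpl in H. pose proof (Rabs_pos (u O)).
  replace (C / (0 + 1)) with C in H by field. lra.
Qed.

Lemma CVU_dom_of_rate (fn : nat -> R -> R) (C : R) :
  (forall n m y, (n <= m)%nat -> Rabs (fn n y - fn m y) <= C / (INR n + 1)) ->
  CVU_dom fn (fun _ => True).
Proof.
  intros Hrate. apply CVU_dom_cauchy. intros eps.
  assert (HC : 0 <= C).
  { apply (nonneg_of_abs_le_div_succ (fun n => fn n 0 - fn n 0)). intros n. apply Hrate; lia. }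
  destruct (eventually_div_succ_lt C eps HC (cond_pos eps)) as [N HN].
  exists N. intros n m y _ Hn Hm.
  destruct (Nat.le_ge_cases n m) as [Hnm | Hnm].
  - eapply Rle_lt_trans; [apply Hrate; exact Hnm | apply HN; exact Hn].
  - rewrite Rabs_minus_sym. eapply Rle_lt_trans; [apply Hrate; exact Hnm | apply HN; exact Hm].
Qed.

Lemma is_C1_of_uniform_rate (f : R -> R) (fn : nat -> R -> R) (C C' : R) :
  (forall n, is_C1 (fn n)) ->
  (forall n m y, (n <= m)%nat -> Rabs (Derive (fn n) y - Derive (fn m) y) <= C / (INR n + 1)) ->
  (forall n y, Rabs (f y - fn n y) <= C' / (INR n + 1)) ->
  is_C1 f.
Proof.
  intros Hfn Hd Hf.
  assert (HC' : 0 <= C') by (apply (nonneg_of_abs_le_div_succ (fun n => f 0 - fn n 0)); auto).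
  assert (Hrate : forall n m y, (n <= m)%nat -> Rabs (fn n y - fn m y) <= 2 * C' / (INR n + 1)).
  { intros n m y Hnm.
    pose proof (div_succ_le C' n m HC' Hnm). pose proof (Hf n y). pose proof (Hf m y).
    replace (fn n y - fn m y) with ((f y - fn m y) + - (f y - fn n y)) by ring.
    eapply Rle_trans; [apply Rabs_triang|]. rewrite Rabs_Ropp.
    unfold Rdiv in *. lra. }
  assert (Hlim : forall y, real (Lim_seq (fun n => fn n y)) = f y).
  { intros y. replace (f y) with (real (Finite (f y))) by reflexivity. f_equal.
    apply is_lim_seq_unique, is_lim_seq_spec. intros eps.
    destruct (eventually_div_succ_lt C' eps HC' (cond_pos eps)) as [N HN].
    exists N. intros n Hn. rewrite Rabs_minus_sym.
    eapply Rle_lt_trans; [apply Hf | apply HN; exact Hn]. }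
  assert (Hcv := CVU_dom_of_rate _ _ Hrate).
  assert (Hdcv := CVU_dom_of_rate _ _ Hd).
  assert (Hder : forall y, is_derive f y (Lim_seq (fun n => Derive (fn n) y))).
  { intros y. apply (is_derive_ext (fun y => real (Lim_seq (fun n => fn n y)))); [apply Hlim|].
    apply (CVU_Derive fn (fun _ => True)); auto.
    - apply open_true.
    - intros a b c _ _ _; exact I.
    - intros n z _. apply Hfn.
    - intros n z _. apply Hfn. }
  intros y. split; [eexists; apply Hder|].
  apply continuity_pt_ext with (f := fun y => real (Lim_seq (fun n => Derive (fn n) y))).
  { intros z. symmetry. apply is_derive_unique, Hder. }
  apply (CVU_cont_open (fun n => Derive (fn n)) (fun _ => True)); auto.
  - apply open_true.
  - intros n z _. apply Hfn.
Qed.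

Lemma ex_derive_continuity_pt (f : R -> R) (x : R) : ex_derive f x -> continuity_pt f x.
Proof.
  intros H. apply continuity_pt_filterlim.
  exact (@ex_derive_continuous R_AbsRing R_NormedModule f x H).
Qed.

Lemma ex_RInt_continuity_pt (f : R -> R) (a b : R) :
  (forall z, continuity_pt f z) -> ex_RInt f a b.
Proof.
  intros H. apply (ex_RInt_continuous (V := R_CompleteNormedModule)).
  intros z _. apply continuity_pt_filterlim, H.
Qed.

Lemma continuity_2d_pt_comp (f g1 g2 : R -> R -> R) (y z : R) :
  continuity_2d_pt f (g1 y z) (g2 y z) -> continuity_2d_pt g1 y z ->
  continuity_2d_pt g2 y z -> continuity_2d_pt (fun a b => f (g1 a b) (g2 a b)) y z.
Proof.
  intros Hf H1 H2 eps.
  destruct (Hf eps) as [d Hd].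
  destruct (H1 d) as [d1 Hd1]. destruct (H2 d) as [d2 Hd2].
  assert (h : 0 < Rmin d1 d2) by (apply Rmin_glb_lt; apply cond_pos).
  exists (mkposreal _ h). intros u v Hu Hv. simpl in Hu, Hv.
  pose proof (Rmin_l d1 d2). pose proof (Rmin_r d1 d2).
  apply Hd; [apply Hd1 | apply Hd2]; lra.
Qed.

Lemma continuity_2d_pt_of_pt_l (f : R -> R) (y z : R) :
  continuity_pt f y -> continuity_2d_pt (fun a _ => f a) y z.
Proof.
  intros H. apply (continuity_1d_2d_pt_comp f (fun a _ => a)); auto.
  apply continuity_2d_pt_id1.
Qed.

Lemma continuity_2d_pt_of_pt_r (f : R -> R) (y z : R) :
  continuity_pt f z -> continuity_2d_pt (fun _ b => f b) y z.
Proof.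
  intros H. apply (continuity_1d_2d_pt_comp f (fun _ b => b)); auto.
  apply continuity_2d_pt_id2.
Qed.

Lemma continuity_pt_of_2d_l (f : R -> R -> R) (x y : R) :
  continuity_2d_pt f x y -> continuity_pt (fun u => f u y) x.
Proof.
  intros H. apply continuity_pt_locally. intros eps.
  destruct (H eps) as [d Hd]. exists d. intros v Hv. apply Hd; auto.
  rewrite Rminus_diag, Rabs_R0. apply cond_pos.
Qed.

Lemma continuity_pt_of_2d_r (f : R -> R -> R) (x y : R) :
  continuity_2d_pt f x y -> continuity_pt (fun v => f x v) y.
Proof.
  intros H. apply continuity_pt_locally. intros eps.
  destruct (H eps) as [d Hd]. exists d. intros v Hv. apply Hd; auto.
  rewrite Rminus_diag, Rabs_R0. apply cond_pos.
Qed.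

Lemma continuity_pt_comp_2d (F : R -> R -> R) (g1 g2 : R -> R) (s : R) :
  continuity_2d_pt F (g1 s) (g2 s) -> continuity_pt g1 s -> continuity_pt g2 s ->
  continuity_pt (fun s => F (g1 s) (g2 s)) s.
Proof.
  intros HF H1 H2.
  apply (continuity_pt_of_2d_l (fun a _ => F (g1 a) (g2 a)) s 0).
  apply (continuity_2d_pt_comp F (fun a _ => g1 a) (fun a _ => g2 a)); auto;
    apply continuity_2d_pt_of_pt_l; auto.
Qed.

Lemma continuity_2d_pt_RInt_param (F : R -> R -> R -> R) (a b p0 q0 : R) :
  a <= b -> (forall p q, ex_RInt (F p q) a b) ->
  (forall eps, 0 < eps -> exists d, 0 < d /\ forall p q s, Rabs (p - p0) < d ->
     Rabs (q - q0) < d -> a <= s <= b -> Rabs (F p q s - F p0 q0 s) <= eps) ->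
  continuity_2d_pt (fun p q => RInt (F p q) a b) p0 q0.
Proof.
  intros Hab Hex Hu eps.
  assert (He : 0 < eps / (b - a + 1)) by (apply Rdiv_lt_0_compat; [apply cond_pos | lra]).
  destruct (Hu _ He) as [d [Hd H]].
  exists (mkposreal d Hd). intros p q Hp Hq. simpl in Hp, Hq.
  rewrite <- (RInt_minus (F p q) (F p0 q0)) by auto.
  eapply Rle_lt_trans.
  { apply abs_RInt_le_const; [exact Hab | apply (ex_RInt_minus (F p q) (F p0 q0)); auto |].
    intros s Hs. apply H; auto. }
  pose proof (cond_pos eps).
  replace ((b - a) * (eps / (b - a + 1))) with (eps - eps / (b - a + 1)) by (field; lra). lra.
Qed.

Lemma continuity_pt_RInt_param (D : R -> R -> R) (a b y0 : R) :
  a <= b -> (forall y s, continuity_2d_pt D y s) ->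
  continuity_pt (fun y => RInt (D y) a b) y0.
Proof.
  intros Hab HD.
  apply (continuity_pt_of_2d_l (fun p _ => RInt (D p) a b) y0 0).
  apply (continuity_2d_pt_RInt_param (fun p _ => D p)); auto.
  { intros p _. apply ex_RInt_continuity_pt. intros z. apply continuity_pt_of_2d_r, HD. }
  intros eps Heps.
  destruct (uniform_continuity_2d_1d' D a b y0 (fun x _ => HD y0 x) (mkposreal eps Heps)) as [d Hd].
  exists d. split; [apply cond_pos|]. intros p q s Hp _ Hs.
  left. apply (Hd s y0 s p); auto.
  - pose proof (cond_pos d); lra.
  - apply Rabs_lt_between' in Hp. lra.
  - rewrite Rminus_diag, Rabs_R0. apply cond_pos.
Qed.

Lemma RInt_reflect_shift (f : R -> R) (y N : R) :
  (forall a b, ex_RInt f a b) -> RInt (fun s => f (y - s)) 0 N = RInt f (y - N) y.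
Proof.
  intros Hf.
  assert (E := RInt_comp_lin f (-1) y 0 N).
  replace (-1 * 0 + y) with y in E by ring.
  replace (-1 * N + y) with (y - N) in E by ring.
  rewrite <- (opp_RInt_swap f y (y - N)), <- E by auto.
  rewrite <- (RInt_opp (fun s => scal (-1) (f (-1 * s + y)))).
  - apply RInt_ext. intros s _. change (f (y - s) = - (-1 * f (-1 * s + y))).
    replace (-1 * s + y) with (y - s) by ring. ring.
  - apply (ex_RInt_comp_lin f (-1) y 0 N), Hf.
Qed.

Lemma abs_sub_le_of_derive_bound (f df : R -> R) (a b C : R) :
  a <= b -> 0 <= C ->
  (forall x, a < x < b -> is_derive f x (df x) /\ Rabs (df x) <= C) ->
  (forall x, a <= x <= b -> continuity_pt f x) ->
  Rabs (f b - f a) <= C * (b - a).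
Proof.
  intros Hab HC Hd Hc.
  (* [MVT_gen] may return an endpoint, where nothing is known about [df]; [g] vanishes there. *)
  set (g := fun x => if Rlt_dec a x then if Rlt_dec x b then df x else 0 else 0).
  destruct (MVT_gen f a b g) as [c [_ Hfc]].
  - intros x Hx. rewrite Rmin_left, Rmax_right in Hx by lra. unfold g.
    destruct (Rlt_dec a x); [|lra]. destruct (Rlt_dec x b); [|lra]. apply Hd; lra.
  - intros x Hx. rewrite Rmin_left, Rmax_right in Hx by lra. apply Hc; lra.
  - rewrite Hfc, Rabs_mult, (Rabs_pos_eq (b - a)) by lra.
    apply Rmult_le_compat_r; [lra|]. unfold g.
    destruct (Rlt_dec a c); [destruct (Rlt_dec c b)|]; try (rewrite Rabs_R0; lra). apply Hd; lra.
Qed.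

Lemma abs_mult_sub_le (a a' b b' Ma Mb : R) :
  Rabs b <= Mb -> Rabs a' <= Ma ->
    Rabs (a * b - a' * b') <= Rabs (a - a') * Mb + Ma * Rabs (b - b').
Proof.
  intros Hb Ha'. replace (a * b - a' * b') with ((a - a') * b + a' * (b - b')) by ring.
  eapply Rle_trans; [apply Rabs_triang|]. rewrite !Rabs_mult.
  apply Rplus_le_compat; apply Rmult_le_compat; try apply Rabs_pos; lra.
Qed.

Lemma is_C1_exp_opp_mult (K : R -> R) (c : R) : is_C1 K -> is_C1 (fun z => exp (- K z * c)).
Proof.
  intros HK.
  assert (Hd : forall y, is_derive (fun z => exp (- K z * c)) y
    (exp (- K y * c) * (- Derive K y * c))).
  { intros y. auto_derive; [apply HK | change (Derive (fun x => K x)) with (Derive K); ring]. }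
  intros y. split; [eexists; apply Hd|].
  apply continuity_pt_ext with (f := fun y => exp (- K y * c) * (- Derive K y * c)).
  { intros z. symmetry. apply is_derive_unique, Hd. }
  apply continuity_pt_mult.
  - apply ex_derive_continuity_pt. auto_derive. apply HK.
  - apply continuity_pt_mult;
      [apply continuity_pt_opp, HK | apply continuity_pt_const; intros ? ?; auto].
Qed.

(** * Truncated convolutions *)

Definition trunc_conv (w k : R -> R -> R) (N y tau : R) : R :=
  RInt (fun s => w (y - s) tau * k y s) 0 N.

Section Truncated_convolution.

Variables (w k : R -> R -> R) (M B : R).
Hypothesis w_cont : forall z tau, continuity_2d_pt w z tau.
Hypothesis w_bdd : forall z tau, Rabs (w z tau) <= M.
Hypothesis k_cont : forall y s, continuity_2d_pt k y s.
Hypothesis k_decay : forall y s, Rabs (k y s) <= B / (1 + s ^ 2).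

Lemma decay_const_nonneg : 0 <= B.
Proof.
  specialize (k_decay 0 0). pose proof (Rabs_pos (k 0 0)).
  replace (B / (1 + 0 ^ 2)) with B in k_decay by field. lra.
Qed.

Lemma abs_kernel_le y s : Rabs (k y s) <= B.
Proof.
  pose proof decay_const_nonneg. eapply Rle_trans; [apply k_decay|].
  unfold Rdiv. rewrite <- (Rmult_1_r B) at 2. apply Rmult_le_compat_l; [lra|].
  rewrite <- Rinv_1. apply Rinv_le_contravar; [lra | nra].
Qed.

Lemma continuity_pt_conv_integrand y tau s : continuity_pt (fun s => w (y - s) tau * k y s) s.
Proof.
  apply continuity_pt_mult.
  - apply (continuity_pt_comp_2d w (fun s => y - s) (fun _ => tau)); auto.
    + apply continuity_pt_minus;
        [apply continuity_pt_const; intros ? ?; auto | apply continuity_pt_id].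
    + apply continuity_pt_const; intros ? ?; auto.
  - apply (continuity_pt_comp_2d k (fun _ => y) (fun s => s)); auto.
    + apply continuity_pt_const; intros ? ?; auto.
    + apply continuity_pt_id.
Qed.

Lemma ex_RInt_conv_integrand y tau a b : ex_RInt (fun s => w (y - s) tau * k y s) a b.
Proof. apply ex_RInt_continuity_pt. intros s. apply continuity_pt_conv_integrand. Qed.

Lemma abs_RInt_conv_integrand_le y tau a b :
  1 <= a <= b -> Rabs (RInt (fun s => w (y - s) tau * k y s) a b) <= M * B / a.
Proof.
  intros Hab. apply abs_RInt_le_inv_sq; [exact Hab | apply ex_RInt_conv_integrand |].
  intros s _. rewrite Rabs_mult. unfold Rdiv. rewrite Rmult_assoc.
  apply Rmult_le_compat; try apply Rabs_pos; auto.
Qed.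

Lemma abs_trunc_conv_sub_le N N' y tau :
  1 <= N <= N' -> Rabs (trunc_conv w k N y tau - trunc_conv w k N' y tau) <= M * B / N.
Proof.
  intros HN. unfold trunc_conv.
  set (g := fun s => w (y - s) tau * k y s).
  replace (RInt g 0 N - RInt g 0 N') with (- RInt g N N').
  - rewrite Rabs_Ropp. apply abs_RInt_conv_integrand_le, HN.
  - rewrite <- (RInt_Chasles g 0 N N') by apply ex_RInt_conv_integrand.
    unfold plus; simpl. lra.
Qed.

Lemma abs_conv_boundary_le N y tau :
  1 <= N -> Rabs (w (y - N) tau * k y N) <= M * B / N.
Proof.
  intros HN. rewrite Rabs_mult.
  pose proof decay_const_nonneg.
  assert (0 <= M) by (eapply Rle_trans; [apply Rabs_pos | apply (w_bdd 0 0)]).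
  apply Rle_trans with (M * (B / (1 + N ^ 2))).
  - apply Rmult_le_compat; try apply Rabs_pos; auto.
  - unfold Rdiv. rewrite <- Rmult_assoc. apply Rmult_le_compat_l; [nra|].
    apply Rinv_le_contravar; nra.
Qed.

Lemma conv_integrand_uniformly_continuous (y0 t0 A : R) :
  0 <= A ->
  forall eps, 0 < eps -> exists d, 0 < d /\ forall p q s, Rabs (p - y0) < d ->
    Rabs (q - t0) < d -> 0 <= s <= A ->
    Rabs (w (p - s) q * k p s - w (y0 - s) t0 * k y0 s) <= eps.
Proof.
  intros HA eps Heps.
  assert (M0 : 0 <= M) by (eapply Rle_trans; [apply Rabs_pos | apply (w_bdd 0 0)]).
  assert (K0 := decay_const_nonneg).
  assert (e1 : 0 < eps / (2 * (B + 1))) by (apply Rdiv_lt_0_compat; lra).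
  assert (e2 : 0 < eps / (2 * (M + 1))) by (apply Rdiv_lt_0_compat; lra).
  destruct (uniform_continuity_2d w (y0 - A - 1) (y0 + 1) (t0 - 1) (t0 + 1)
     (fun x y _ _ => w_cont x y) (mkposreal _ e1)) as [d1 Hd1].
  destruct (uniform_continuity_2d k (y0 - 1) (y0 + 1) 0 A
     (fun x y _ _ => k_cont x y) (mkposreal _ e2)) as [d2 Hd2].
  set (d := Rmin (Rmin d1 d2) 1).
  assert (h1 : d <= d1) by (unfold d; eapply Rle_trans; [apply Rmin_l | apply Rmin_l]).
  assert (h2 : d <= d2) by (unfold d; eapply Rle_trans; [apply Rmin_l | apply Rmin_r]).
  assert (h3 : d <= 1) by (unfold d; apply Rmin_r).
  exists d. split; [unfold d; apply Rmin_glb_lt; [apply Rmin_glb_lt; apply cond_pos | lra]|].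
  intros p q s Hp Hq Hs.
  apply Rabs_lt_between' in Hp. apply Rabs_lt_between' in Hq.
  assert (A1 : Rabs (w (p - s) q - w (y0 - s) t0) < eps / (2 * (B + 1))).
  { apply (Hd1 (y0 - s) t0 (p - s) q); try lra; apply Rabs_lt_between'; lra. }
  assert (A2 : Rabs (k p s - k y0 s) < eps / (2 * (M + 1))).
  { apply (Hd2 y0 s p s); try lra.
    - apply Rabs_lt_between'; lra.
    - rewrite Rminus_diag, Rabs_R0. apply cond_pos. }
  eapply Rle_trans; [apply abs_mult_sub_le; [apply abs_kernel_le | apply w_bdd]|].
  assert (B1 : Rabs (w (p - s) q - w (y0 - s) t0) * B <= eps / (2 * (B + 1)) * B)
    by (apply Rmult_le_compat_r; lra).
  assert (B2 : M * Rabs (k p s - k y0 s) <= M * (eps / (2 * (M + 1))))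
    by (apply Rmult_le_compat_l; lra).
  assert (C1 : eps / (2 * (B + 1)) * B <= eps / 2).
  { apply Rle_trans with (eps / (2 * (B + 1)) * (B + 1)); [apply Rmult_le_compat_l; lra|].
    right; field; lra. }
  assert (C2 : M * (eps / (2 * (M + 1))) <= eps / 2).
  { apply Rle_trans with ((M + 1) * (eps / (2 * (M + 1)))); [apply Rmult_le_compat_r; lra|].
    right; field; lra. }
  lra.
Qed.

Lemma continuity_2d_pt_trunc_conv N y tau :
  0 <= N -> continuity_2d_pt (trunc_conv w k N) y tau.
Proof.
  intros HN. unfold trunc_conv.
  apply (continuity_2d_pt_RInt_param (fun p q s => w (p - s) q * k p s)); [exact HN | |].
  - intros p q. apply ex_RInt_conv_integrand.
  - apply conv_integrand_uniformly_continuous, HN.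
Qed.

End Truncated_convolution.

Section Truncated_convolution_derivative.

Variables (w k kd : R -> R -> R) (M Bk Bkd : R).
Hypothesis w_cont : forall z tau, continuity_2d_pt w z tau.
Hypothesis w_bdd : forall z tau, Rabs (w z tau) <= M.
Hypothesis k_cont : forall y s, continuity_2d_pt k y s.
Hypothesis k_decay : forall y s, Rabs (k y s) <= Bk / (1 + s ^ 2).
Hypothesis kd_cont : forall y s, continuity_2d_pt kd y s.
Hypothesis kd_decay : forall y s, Rabs (kd y s) <= Bkd / (1 + s ^ 2).
Hypothesis k_diag_derive : forall z y, is_derive (fun y => k y (y - z)) y (kd y (y - z)).

Definition trunc_conv_dx (N y tau : R) : R :=
  trunc_conv w kd N y tau + w y tau * k y 0 - w (y - N) tau * k y N.

Lemma continuity_2d_pt_diag_integrand (k' : R -> R -> R) (tau a z : R) :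
  (forall y s, continuity_2d_pt k' y s) -> continuity_2d_pt (fun a z => w z tau * k' a (a - z)) a z.
Proof.
  intros Hk'. apply continuity_2d_pt_mult.
  - apply (continuity_2d_pt_comp w (fun _ z => z) (fun _ _ => tau)); auto.
    + apply continuity_2d_pt_id2.
    + apply continuity_2d_pt_const.
  - apply (continuity_2d_pt_comp k' (fun a _ => a) (fun a z => a - z)); auto.
    + apply continuity_2d_pt_id1.
    + apply continuity_2d_pt_minus; [apply continuity_2d_pt_id1 | apply continuity_2d_pt_id2].
Qed.

Lemma trunc_conv_eq_RInt_diag (k' : R -> R -> R) (N y tau : R) :
  (forall y s, continuity_2d_pt k' y s) ->
  trunc_conv w k' N y tau = RInt (fun z => w z tau * k' y (y - z)) (y - N) y.
Proof.
  intros Hk'. unfold trunc_conv. rewrite <- RInt_reflect_shift.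
  - apply RInt_ext. intros s _. replace (y - (y - s)) with s by ring. reflexivity.
  - intros b c. apply ex_RInt_continuity_pt. intros z.
    apply (continuity_pt_of_2d_r (fun a z => w z tau * k' a (a - z))),
      continuity_2d_pt_diag_integrand, Hk'.
Qed.

(* In the form of [trunc_conv_eq_RInt_diag], [y] only enters through the limits of
   integration and through [k y (y - z)], which [k_diag_derive] differentiates. *)
Lemma is_derive_trunc_conv (N y tau : R) :
  is_derive (fun y => trunc_conv w k N y tau) y (trunc_conv_dx N y tau).
Proof.
  set (f := fun a z => w z tau * k a (a - z)).
  assert (Hex : forall a b c, ex_RInt (f a) b c).
  { intros a b c. apply ex_RInt_continuity_pt. intros z.
    apply (continuity_pt_of_2d_r f), continuity_2d_pt_diag_integrand, k_cont. }
  assert (Hd : forall a z, is_derive (fun u => f u z) a (w z tau * kd a (a - z))).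
  { intros a z. apply (is_derive_scal (fun u => k u (u - z))), k_diag_derive. }
  assert (HD : forall a z, Derive (fun u => f u z) a = w z tau * kd a (a - z)).
  { intros a z. apply is_derive_unique, Hd. }
  assert (Hdc : forall a z, continuity_2d_pt (fun u v => Derive (fun z => f z v) u) a z).
  { intros a z. apply continuity_2d_pt_ext with (f := fun u v => w v tau * kd u (u - v)).
    - intros; symmetry; apply HD.
    - apply continuity_2d_pt_diag_integrand, kd_cont. }
  apply (is_derive_ext (fun a => RInt (f a) (a - N) a)).
  { intros a. symmetry. apply trunc_conv_eq_RInt_diag, k_cont. }
  replace (trunc_conv_dx N y tau) with
    (RInt (fun z => Derive (fun u => f u z) y) (y - N) y + - f y (y - N) * 1 + f y y * 1).
  - apply (is_derive_RInt_param_bound_comp f (fun a => a - N) (fun a => a) y 1 1).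
    + apply filter_forall. intros; apply Hex.
    + exists (mkposreal 1 Rlt_0_1). apply filter_forall. intros; apply Hex.
    + exists (mkposreal 1 Rlt_0_1). apply filter_forall. intros; apply Hex.
    + auto_derive; [exact I | ring].
    + auto_derive; [exact I | ring].
    + exists (mkposreal 1 Rlt_0_1). apply filter_forall. intros a z _. eexists. apply Hd.
    + intros; apply Hdc.
    + exists (mkposreal 1 Rlt_0_1). intros; apply Hdc.
    + exists (mkposreal 1 Rlt_0_1). intros; apply Hdc.
    + apply (continuity_pt_of_2d_r f), continuity_2d_pt_diag_integrand, k_cont.
    + apply (continuity_pt_of_2d_r f), continuity_2d_pt_diag_integrand, k_cont.
  - unfold trunc_conv_dx. rewrite (trunc_conv_eq_RInt_diag kd) by apply kd_cont.
    rewrite (RInt_ext _ (fun z => w z tau * kd y (y - z))) by (intros; apply HD).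
    unfold f. replace (y - (y - N)) with N by ring. replace (y - y) with 0 by ring. ring.
Qed.

Lemma abs_trunc_conv_dx_sub_le N N' y tau :
  1 <= N <= N' ->
  Rabs (trunc_conv_dx N y tau - trunc_conv_dx N' y tau) <= (M * Bkd + 2 * (M * Bk)) / N.
Proof.
  intros HN. unfold trunc_conv_dx.
  pose proof (abs_trunc_conv_sub_le w kd M Bkd w_cont w_bdd kd_cont kd_decay N N' y tau HN).
  pose proof (abs_conv_boundary_le w k M Bk w_bdd k_decay N y tau (proj1 HN)).
  pose proof (abs_conv_boundary_le w k M Bk w_bdd k_decay N' y tau ltac:(lra)).
  assert (M * Bk / N' <= M * Bk / N).
  { apply Rmult_le_compat_l; [| apply Rinv_le_contravar; lra].
    apply Rmult_le_pos; [| apply (decay_const_nonneg k Bk k_decay)].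
    eapply Rle_trans; [apply Rabs_pos | apply (w_bdd 0 0)]. }
  match goal with |- Rabs ?e <= _ =>
    replace e with ((trunc_conv w kd N y tau - trunc_conv w kd N' y tau)
                    + - (w (y - N) tau * k y N) + w (y - N') tau * k y N') by ring end.
  eapply Rle_trans; [apply Rabs_triang|].
  eapply Rle_trans; [apply Rplus_le_compat_r, Rabs_triang|]. rewrite Rabs_Ropp.
  unfold Rdiv in *. lra.
Qed.

End Truncated_convolution_derivative.

(** * Duhamel's formula *)

Section Duhamel.

Variables (K : R -> R) (w k kd : R -> R -> R) (t M Bk Bkd : R).
Hypothesis t_nonneg : 0 <= t.
Hypothesis K_C1 : is_C1 K.
Hypothesis K_bdd : bdd_fun K.
Hypothesis DK_bdd : bdd_fun (Derive K).
Hypothesis K_int : forall y, is_RInt_gen (k y) (at_point 0) (Rbar_locally p_infty) (K y).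
Hypothesis w_cont : forall z tau, continuity_2d_pt w z tau.
Hypothesis w_bdd : forall z tau, Rabs (w z tau) <= M.
Hypothesis k_cont : forall y s, continuity_2d_pt k y s.
Hypothesis k_decay : forall y s, Rabs (k y s) <= Bk / (1 + s ^ 2).
Hypothesis kd_cont : forall y s, continuity_2d_pt kd y s.
Hypothesis kd_decay : forall y s, Rabs (kd y s) <= Bkd / (1 + s ^ 2).
Hypothesis k_diag_derive : forall z y, is_derive (fun y => k y (y - z)) y (kd y (y - z)).
Hypothesis w_eq : forall y tau, 0 < tau ->
  ex_RInt_gen (fun s => (w y tau - w (y - s) tau) * k y s) (at_point 0) (Rbar_locally p_infty) /\
  is_derive (fun tau => w y tau) tau (- int0inf (fun s => (w y tau - w (y - s) tau) * k y s)).

Definition duhamel_integrand (N y tau : R) : R :=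
  exp (K y * tau) * trunc_conv w k N y tau.

Definition duhamel_integrand_dx (N y tau : R) : R :=
  exp (K y * tau) * (Derive K y * tau * trunc_conv w k N y tau + trunc_conv_dx w k kd N y tau).

(* The equation reads [w_t + K w = L w] with [L w y tau = int_0^oo w (y - s) tau * k y s ds], so
   [exp (K y * t) * w y t - w y 0 = int_0^t exp (K y * tau) * L w y tau dtau];
   [duhamel_approx n] is the right-hand side with [L] truncated at [s = n + 1]. *)
Definition duhamel_approx (n : nat) (y : R) : R :=
  RInt (duhamel_integrand (INR n + 1) y) 0 t.

Lemma continuity_2d_pt_exp_K y tau : continuity_2d_pt (fun y tau => exp (K y * tau)) y tau.
Proof.
  apply (continuity_1d_2d_pt_comp exp (fun y tau => K y * tau)).
  - apply ex_derive_continuity_pt. eexists. apply is_derive_exp.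
  - apply continuity_2d_pt_mult; [|apply continuity_2d_pt_id2].
    apply continuity_2d_pt_of_pt_l, ex_derive_continuity_pt, K_C1.
Qed.

Lemma continuity_2d_pt_duhamel_integrand N y tau :
  0 <= N -> continuity_2d_pt (duhamel_integrand N) y tau.
Proof.
  intros HN. apply continuity_2d_pt_mult; [apply continuity_2d_pt_exp_K|].
  apply (continuity_2d_pt_trunc_conv w k M Bk w_cont w_bdd k_cont k_decay), HN.
Qed.

Lemma continuity_2d_pt_duhamel_integrand_dx N y tau :
  0 <= N -> continuity_2d_pt (duhamel_integrand_dx N) y tau.
Proof.
  intros HN.
  assert (Hk_y : forall s, continuity_2d_pt (fun y _ => k y s) y tau).
  { intros s. apply (continuity_2d_pt_comp k (fun y _ => y) (fun _ _ => s));
      [apply k_cont | apply continuity_2d_pt_id1 | apply continuity_2d_pt_const]. }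
  apply continuity_2d_pt_mult; [apply continuity_2d_pt_exp_K|].
  apply continuity_2d_pt_plus; [apply continuity_2d_pt_mult; [apply continuity_2d_pt_mult|]|].
  - apply continuity_2d_pt_of_pt_l. apply K_C1.
  - apply continuity_2d_pt_id2.
  - apply (continuity_2d_pt_trunc_conv w k M Bk w_cont w_bdd k_cont k_decay), HN.
  - unfold trunc_conv_dx. apply continuity_2d_pt_minus; [apply continuity_2d_pt_plus|].
    + apply (continuity_2d_pt_trunc_conv w kd M Bkd w_cont w_bdd kd_cont kd_decay), HN.
    + apply continuity_2d_pt_mult; [apply w_cont | apply Hk_y].
    + apply continuity_2d_pt_mult; [|apply Hk_y].
      apply (continuity_2d_pt_comp w (fun y _ => y - N) (fun _ tau => tau)); [apply w_cont | |].
      * apply continuity_2d_pt_minus; [apply continuity_2d_pt_id1 | apply continuity_2d_pt_const].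
      * apply continuity_2d_pt_id2.
Qed.

Lemma is_derive_duhamel_integrand N y tau :
  is_derive (fun y => duhamel_integrand N y tau) y (duhamel_integrand_dx N y tau).
Proof.
  assert (Hconv := is_derive_trunc_conv w k kd w_cont k_cont kd_cont k_diag_derive N y tau).
  unfold duhamel_integrand, duhamel_integrand_dx.
  auto_derive.
  - repeat split; [apply K_C1 | eexists; exact Hconv].
  - change (Derive (fun x => K x)) with (Derive K).
    replace (Derive (fun x : R => trunc_conv w k N x tau) y) with (trunc_conv_dx w k kd N y tau)
      by (symmetry; apply is_derive_unique, Hconv).
    ring.
Qed.

Lemma is_derive_duhamel_approx n y :
  is_derive (duhamel_approx n) y (RInt (duhamel_integrand_dx (INR n + 1) y) 0 t).
Proof.
  set (N := INR n + 1). assert (HN : 0 <= N) by (unfold N; pose proof (pos_INR n); lra).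
  unfold duhamel_approx. fold N.
  replace (RInt (duhamel_integrand_dx N y) 0 t)
    with (RInt (fun tau => Derive (fun u => duhamel_integrand N u tau) y) 0 t)
    by (apply RInt_ext; intros; apply is_derive_unique, is_derive_duhamel_integrand).
  apply (is_derive_RInt_param (duhamel_integrand N) 0 t y).
  - apply filter_forall. intros y' tau _. eexists; apply is_derive_duhamel_integrand.
  - intros tau _. apply continuity_2d_pt_ext with (f := duhamel_integrand_dx N).
    { intros; symmetry; apply is_derive_unique, is_derive_duhamel_integrand. }
    apply continuity_2d_pt_duhamel_integrand_dx, HN.
  - apply filter_forall. intros y'. apply ex_RInt_continuity_pt. intros tau.
    apply (continuity_pt_of_2d_r (duhamel_integrand N)), continuity_2d_pt_duhamel_integrand, HN.
Qed.

Lemma duhamel_approx_C1 n : is_C1 (duhamel_approx n).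
Proof.
  intros y. split; [eexists; apply is_derive_duhamel_approx|].
  apply continuity_pt_ext with (f := fun y => RInt (duhamel_integrand_dx (INR n + 1) y) 0 t).
  { intros z. symmetry. apply is_derive_unique, is_derive_duhamel_approx. }
  apply continuity_pt_RInt_param; [exact t_nonneg|].
  intros; apply continuity_2d_pt_duhamel_integrand_dx. pose proof (pos_INR n); lra.
Qed.

Lemma exp_K_le : exists E, 0 <= E /\ forall y tau, 0 <= tau <= t -> exp (K y * tau) <= E.
Proof.
  destruct K_bdd as [Kmax HK].
  exists (exp (Kmax * t)). split; [left; apply exp_pos|].
  intros y tau Htau.
  assert (HKt : K y * tau <= Kmax * t).
  { pose proof (HK y). pose proof (Rle_abs (K y)). pose proof (Rabs_pos (K y)).
    apply Rle_trans with (Rabs (K y) * tau); [apply Rmult_le_compat_r; lra|].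
    apply Rmult_le_compat; lra. }
  destruct (Rle_lt_or_eq_dec _ _ HKt) as [Hlt | ->];
    [left; apply exp_increasing, Hlt | right; reflexivity].
Qed.

Lemma abs_duhamel_integrand_dx_sub_le : exists C, forall N N' y tau,
  1 <= N <= N' -> 0 <= tau <= t ->
  Rabs (duhamel_integrand_dx N y tau - duhamel_integrand_dx N' y tau) <= C / N.
Proof.
  destruct exp_K_le as [E [HE0 HE]]. destruct DK_bdd as [K1 HK1].
  exists (E * (K1 * t * (M * Bk) + (M * Bkd + 2 * (M * Bk)))).
  intros N N' y tau HN Htau. unfold duhamel_integrand_dx.
  rewrite <- Rmult_minus_distr_l, Rabs_mult, (Rabs_pos_eq (exp _)) by (left; apply exp_pos).
  unfold Rdiv. rewrite (Rmult_assoc E).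
  apply Rmult_le_compat; [left; apply exp_pos | apply Rabs_pos | apply HE, Htau |].
  replace (Derive K y * tau * trunc_conv w k N y tau + trunc_conv_dx w k kd N y tau
           - (Derive K y * tau * trunc_conv w k N' y tau + trunc_conv_dx w k kd N' y tau))
    with (Derive K y * tau * (trunc_conv w k N y tau - trunc_conv w k N' y tau)
          + (trunc_conv_dx w k kd N y tau - trunc_conv_dx w k kd N' y tau)) by ring.
  eapply Rle_trans; [apply Rabs_triang|]. rewrite Rmult_plus_distr_r.
  apply Rplus_le_compat.
  - rewrite !Rabs_mult, (Rabs_pos_eq tau) by lra.
    apply Rle_trans with (K1 * t * (M * Bk / N)); [| right; unfold Rdiv; ring].
    apply Rmult_le_compat; [apply Rmult_le_pos; [apply Rabs_pos | lra] | apply Rabs_pos | |].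
    + apply Rmult_le_compat; [apply Rabs_pos | lra | apply HK1 | lra].
    + apply (abs_trunc_conv_sub_le w k M Bk w_cont w_bdd k_cont k_decay), HN.
  - apply (abs_trunc_conv_dx_sub_le w k kd M Bk Bkd); auto.
Qed.

Lemma Derive_duhamel_approx_rate : exists C, forall n m y, (n <= m)%nat ->
  Rabs (Derive (duhamel_approx n) y - Derive (duhamel_approx m) y) <= C / (INR n + 1).
Proof.
  destruct abs_duhamel_integrand_dx_sub_le as [C HC].
  exists (t * C). intros n m y Hnm.
  set (N := INR n + 1). set (N' := INR m + 1).
  assert (HN : 1 <= N <= N') by (unfold N, N'; apply le_INR in Hnm; pose proof (pos_INR n); lra).
  assert (Hex : forall N'', 0 <= N'' -> ex_RInt (duhamel_integrand_dx N'' y) 0 t).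
  { intros N'' HN''. apply ex_RInt_continuity_pt. intros tau.
    apply (continuity_pt_of_2d_r (duhamel_integrand_dx N'')),
      continuity_2d_pt_duhamel_integrand_dx, HN''. }
  rewrite (is_derive_unique _ _ _ (is_derive_duhamel_approx n y)),
          (is_derive_unique _ _ _ (is_derive_duhamel_approx m y)).
  fold N N'.
  replace (RInt (duhamel_integrand_dx N y) 0 t - RInt (duhamel_integrand_dx N' y) 0 t)
    with (RInt (fun tau => duhamel_integrand_dx N y tau - duhamel_integrand_dx N' y tau) 0 t)
    by (apply (RInt_minus (duhamel_integrand_dx N y)); apply Hex; lra).
  eapply Rle_trans; [apply abs_RInt_le_const;
    [exact t_nonneg | | intros tau Htau; apply HC; assumption]|].
  { apply (ex_RInt_minus (duhamel_integrand_dx N y)); apply Hex; lra. }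
  right. unfold Rdiv. ring.
Qed.

Lemma is_RInt_gen_conv_integrand y tau : 0 < tau ->
  is_RInt_gen (fun s => w (y - s) tau * k y s) (at_point 0) (Rbar_locally p_infty)
    (K y * w y tau - int0inf (fun s => (w y tau - w (y - s) tau) * k y s)).
Proof.
  intros Htau. destruct (w_eq y tau Htau) as [Hex _].
  set (F := fun s => (w y tau - w (y - s) tau) * k y s).
  apply (is_RInt_gen_ext (fun s => minus (scal (w y tau) (k y s)) (F s))).
  { apply filter_forall. intros _ s _. unfold F, minus, plus, opp, scal; simpl; unfold mult; simpl.
    ring. }
  replace (K y * w y tau - int0inf F) with (minus (scal (w y tau) (K y)) (int0inf F))
    by (unfold minus, plus, opp, scal; simpl; unfold mult; simpl; ring).
  (* The instances are given explicitly: leaving them to unification does not terminate. *)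
  apply (@is_RInt_gen_minus R_NormedModule _ _ _ _ (fun s => scal (w y tau) (k y s)) F).
  - exact (@is_RInt_gen_scal R_NormedModule _ _ _ _ (k y) (w y tau) (K y) (K_int y)).
  - exact (RInt_gen_correct F Hex).
Qed.

Lemma abs_nonlocal_sub_trunc_conv_le y tau N : 0 < tau -> 1 <= N ->
  Rabs (K y * w y tau - int0inf (fun s => (w y tau - w (y - s) tau) * k y s)
        - trunc_conv w k N y tau) <= M * Bk / N.
Proof.
  intros Htau HN.
  apply abs_RInt_gen_sub_RInt_le; [apply is_RInt_gen_conv_integrand, Htau | |].
  - apply (ex_RInt_conv_integrand w k w_cont k_cont).
  - intros b Hb. apply (abs_RInt_conv_integrand_le w k M Bk w_cont w_bdd k_cont k_decay); lra.
Qed.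

Lemma is_derive_RInt_duhamel_integrand N y tau : 0 <= N ->
  is_derive (fun tau => RInt (duhamel_integrand N y) 0 tau) tau (duhamel_integrand N y tau).
Proof.
  intros HN.
  assert (Hcont : forall tau, continuity_pt (duhamel_integrand N y) tau).
  { intros tau'. apply (continuity_pt_of_2d_r (duhamel_integrand N)),
      continuity_2d_pt_duhamel_integrand, HN. }
  apply (is_derive_RInt _ _ 0).
  - apply filter_forall. intros b. apply RInt_correct, ex_RInt_continuity_pt, Hcont.
  - apply continuity_pt_filterlim, Hcont.
Qed.

Lemma is_derive_exp_K_mult y tau : 0 < tau ->
  is_derive (fun tau => exp (K y * tau) * w y tau) tau
    (exp (K y * tau) * (K y * w y tau - int0inf (fun s => (w y tau - w (y - s) tau) * k y s))).
Proof.
  intros Htau. destruct (w_eq y tau Htau) as [_ Hw].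
  replace (exp (K y * tau) * (K y * w y tau - int0inf (fun s => (w y tau - w (y - s) tau) * k y s)))
    with (K y * exp (K y * tau) * w y tau
          + exp (K y * tau) * (- int0inf (fun s => (w y tau - w (y - s) tau) * k y s))) by ring.
  apply (is_derive_mult (fun tau => exp (K y * tau)) (fun tau => w y tau));
    [| exact Hw | intros; apply Rmult_comm].
  auto_derive; [exact I | ring].
Qed.

Lemma duhamel_approx_error : exists C, forall n y,
  Rabs (exp (K y * t) * w y t - w y 0 - duhamel_approx n y) <= C / (INR n + 1).
Proof.
  destruct exp_K_le as [E [HE0 HE]].
  assert (HM : 0 <= M) by (eapply Rle_trans; [apply Rabs_pos | apply (w_bdd 0 0)]).
  assert (HBk := decay_const_nonneg k Bk k_decay).
  exists (t * (E * (M * Bk))). intros n y.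
  set (N := INR n + 1). assert (HN : 1 <= N) by (unfold N; pose proof (pos_INR n); lra).
  set (Phi := fun tau => exp (K y * tau) * w y tau - RInt (duhamel_integrand N y) 0 tau).
  assert (HPhi0 : Phi 0 = w y 0).
  { unfold Phi. rewrite Rmult_0_r, exp_0, RInt_point. unfold zero; simpl. ring. }
  replace (exp (K y * t) * w y t - w y 0 - duhamel_approx n y) with (Phi t - Phi 0)
    by (rewrite HPhi0; unfold Phi, duhamel_approx; fold N; ring).
  replace (t * (E * (M * Bk)) / N) with (E * (M * Bk / N) * (t - 0)) by (unfold Rdiv; ring).
  apply (abs_sub_le_of_derive_bound Phi (fun tau => exp (K y * tau) *
           (K y * w y tau - int0inf (fun s => (w y tau - w (y - s) tau) * k y s)
            - trunc_conv w k N y tau)));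
    [exact t_nonneg | apply Rmult_le_pos; [exact HE0 | apply Rdiv_le_0_compat; nra] | |].
  - intros tau Htau. split.
    + unfold Phi. rewrite Rmult_minus_distr_l.
      apply (is_derive_minus (fun tau => exp (K y * tau) * w y tau));
        [apply is_derive_exp_K_mult; lra | apply is_derive_RInt_duhamel_integrand; lra].
    + rewrite Rabs_mult, (Rabs_pos_eq (exp _)) by (left; apply exp_pos).
      apply Rmult_le_compat; [left; apply exp_pos | apply Rabs_pos | apply HE; lra |].
      apply abs_nonlocal_sub_trunc_conv_le; lra.
  - intros tau Htau. unfold Phi. apply continuity_pt_minus.
    + apply continuity_pt_mult;
        [apply (continuity_pt_of_2d_r (fun y tau => exp (K y * tau))), continuity_2d_pt_exp_K |].
      apply continuity_pt_of_2d_r, w_cont.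
    + apply ex_derive_continuity_pt. eexists. apply is_derive_RInt_duhamel_integrand; lra.
Qed.

Theorem duhamel_C1 : is_C1 (fun y => exp (K y * t) * w y t - w y 0).
Proof.
  destruct Derive_duhamel_approx_rate as [C HC].
  destruct duhamel_approx_error as [C' HC'].
  exact (is_C1_of_uniform_rate _ duhamel_approx C C' duhamel_approx_C1 HC HC').
Qed.

End Duhamel.

(** * Jumps of derivatives *)

Lemma at_left_le_locally (x : R) : filter_le (at_left x) (locally x).
Proof. intros P HP. unfold at_left, within. revert HP; apply filter_imp; auto. Qed.

Lemma at_right_le_locally (x : R) : filter_le (at_right x) (locally x).
Proof. intros P HP. unfold at_right, within. revert HP; apply filter_imp; auto. Qed.

Lemma filterlim_plus_continuity_pt (F : (R -> Prop) -> Prop) {FF : Filter F}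
  (f q : R -> R) (x l : R) :
  filter_le F (locally x) -> continuity_pt q x -> filterlim f F (locally l) ->
  filterlim (fun y => f y + q y) F (locally (l + q x)).
Proof.
  intros HF Hq Hf.
  apply (filterlim_comp_2 (G := locally l) (H := locally (q x)) f q Rplus); [exact Hf | |].
  - apply (filterlim_filter_le_1 _ HF), continuity_pt_filterlim, Hq.
  - apply (filterlim_plus (K := R_AbsRing) l (q x)).
Qed.

Lemma filterlim_mult_continuity_pt (F : (R -> Prop) -> Prop) {FF : Filter F}
  (c f : R -> R) (x l : R) :
  filter_le F (locally x) -> continuity_pt c x -> filterlim f F (locally l) ->
  filterlim (fun y => c y * f y) F (locally (c x * l)).
Proof.
  intros HF Hc Hf.
  apply (filterlim_comp_2 (G := locally (c x)) (H := locally l) c f Rmult); [| exact Hf |].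
  - apply (filterlim_filter_le_1 _ HF), continuity_pt_filterlim, Hc.
  - apply (filterlim_mult (K := R_AbsRing) (c x) l).
Qed.

Lemma is_jump_ext_punctured (f g : R -> R) (x j : R) :
  locally x (fun y => y <> x -> f y = g y) -> is_jump f x j -> is_jump g x j.
Proof.
  intros Hfg [l [r [Hl [Hr Hj]]]]. exists l, r. split; [|split]; [| | exact Hj].
  - apply (filterlim_ext_loc f); [| exact Hl].
    unfold at_left, within. revert Hfg; apply filter_imp. intros y Hy Hlt. apply Hy. lra.
  - apply (filterlim_ext_loc f); [| exact Hr].
    unfold at_right, within. revert Hfg; apply filter_imp. intros y Hy Hlt. apply Hy. lra.
Qed.

Lemma is_jump_plus_continuity_pt (f q : R -> R) (x j : R) :
  continuity_pt q x -> is_jump f x j -> is_jump (fun y => f y + q y) x j.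
Proof.
  intros Hq [l [r [Hl [Hr Hj]]]]. exists (l + q x), (r + q x). split; [|split].
  - apply (filterlim_plus_continuity_pt (at_left x) f q x l);
      [apply at_left_le_locally | exact Hq | exact Hl].
  - apply (filterlim_plus_continuity_pt (at_right x) f q x r);
      [apply at_right_le_locally | exact Hq | exact Hr].
  - rewrite Hj. ring.
Qed.

Lemma is_jump_mult_continuity_pt (c f : R -> R) (x j : R) :
  continuity_pt c x -> is_jump f x j -> is_jump (fun y => c y * f y) x (c x * j).
Proof.
  intros Hc [l [r [Hl [Hr Hj]]]]. exists (c x * l), (c x * r). split; [|split].
  - apply (filterlim_mult_continuity_pt (at_left x) c f x l);
      [apply at_left_le_locally | exact Hc | exact Hl].
  - apply (filterlim_mult_continuity_pt (at_right x) c f x r);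
      [apply at_right_le_locally | exact Hc | exact Hr].
  - rewrite Hj. ring.
Qed.

(* Away from [x] the product rule writes the derivative as [g * p'] plus a term
   that is continuous at [x], so only [g x] times the jump of [p'] survives. *)
Lemma is_jump_Derive_mult_plus (g p V : R -> R) (x j : R) :
  is_C1 g -> is_C1 V -> continuity_pt p x ->
  locally x (fun y => y <> x -> ex_derive p y) -> is_jump (Derive p) x j ->
  is_jump (Derive (fun z => g z * (p z + V z))) x (g x * j).
Proof.
  intros Hg HV Hp Hpd Hj.
  set (Q := fun y => Derive g y * (p y + V y) + g y * Derive V y).
  apply (is_jump_ext_punctured (fun y => g y * Derive p y + Q y)).
  - revert Hpd; apply filter_imp. intros y Hy Hyx. symmetry. apply is_derive_unique.
    destruct (Hy Hyx) as [dp Hdp]. rewrite (is_derive_unique _ _ _ Hdp).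
    replace (g y * dp + Q y) with (Derive g y * (p y + V y) + g y * (dp + Derive V y))
      by (unfold Q; ring).
    apply (is_derive_mult g (fun z => p z + V z));
      [apply Derive_correct, Hg | | intros; apply Rmult_comm].
    apply (is_derive_plus p V); [exact Hdp | apply Derive_correct, HV].
  - apply is_jump_plus_continuity_pt;
      [| apply is_jump_mult_continuity_pt; [apply ex_derive_continuity_pt, Hg | exact Hj]].
    unfold Q. apply continuity_pt_plus; apply continuity_pt_mult; try apply Hg; try apply HV.
    + apply continuity_pt_plus; [exact Hp | apply ex_derive_continuity_pt, HV].
    + apply ex_derive_continuity_pt, Hg.
Qed.


(** * The kernel gamma *)

Lemma smooth_ex_derive (f : R -> R) (x : R) : smooth f -> ex_derive f x.
Proof. intros Hf. exact (Hf 1%nat x). Qed.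

Lemma smooth_continuity_pt (f : R -> R) (x : R) : smooth f -> continuity_pt f x.
Proof. intros Hf. apply ex_derive_continuity_pt, smooth_ex_derive, Hf. Qed.

Lemma smooth_continuity_pt_Derive (f : R -> R) (x : R) : smooth f -> continuity_pt (Derive f) x.
Proof. intros Hf. apply ex_derive_continuity_pt. exact (Hf 2%nat x). Qed.

Lemma inv_sq_decay_of_compact_support (f : R -> R) (L : R) :
  (forall r, continuity_pt f r) -> (forall r, L < Rabs r -> f r = 0) ->
  exists B, forall r, Rabs (f r) * (1 + Rabs r) <= B / (1 + r ^ 2).
Proof.
  intros Hf HL.
  set (L1 := Rabs L). assert (HL1 : 0 <= L1) by apply Rabs_pos.
  destruct (continuity_ab_maj (fun r => Rabs (f r)) (- L1) L1) as [m [Hm _]]; [lra | |].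
  { intros c _. apply continuity_pt_filterlim.
    apply (continuous_comp f Rabs); [apply continuity_pt_filterlim, Hf | apply continuous_Rabs]. }
  exists (Rabs (f m) * ((1 + L1) * (1 + L1 ^ 2))).
  intros r. assert (Hc : 1 + r ^ 2 > 0) by nra. apply (Rle_div_r _ _ _ Hc).
  pose proof (Rabs_pos r) as Hr0. pose proof (Rabs_pos (f m)). pose proof (Rabs_pos (f r)).
  assert (Hr2 : r ^ 2 = Rabs r * Rabs r) by (rewrite <- (pow2_abs r); ring).
  destruct (Rle_dec (Rabs r) L1) as [Hr | Hr].
  - assert (Rabs (f r) <= Rabs (f m)) by (apply Hm; apply Rabs_le_between; exact Hr).
    assert (Ha2 : Rabs r * Rabs r <= L1 * L1) by (apply Rmult_le_compat; lra).
    assert ((1 + Rabs r) * (1 + Rabs r * Rabs r) <= (1 + L1) * (1 + L1 ^ 2))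
      by (replace (L1 ^ 2) with (L1 * L1) by ring; apply Rmult_le_compat; nra).
    rewrite Hr2, Rmult_assoc. apply Rmult_le_compat; nra.
  - rewrite (HL r) by (pose proof (Rle_abs L); unfold L1 in Hr; lra).
    rewrite Rabs_R0, !Rmult_0_l. pose proof (pow2_ge_0 L1).
    apply Rmult_le_pos; [lra | apply Rmult_le_pos; lra].
Qed.

Lemma Derive_eq_0_of_compact_support (f : R -> R) (L : R) :
  (forall r, L < Rabs r -> f r = 0) -> forall r, L < Rabs r -> Derive f r = 0.
Proof.
  intros HL r Hr.
  rewrite (Derive_ext_loc f (fun _ => 0)); [apply Derive_const|].
  assert (Hd : 0 < Rabs r - L) by lra.
  apply (filter_imp (ball r (mkposreal _ Hd))); [| apply locally_ball].
  intros y Hy. change (Rabs (y - r) < Rabs r - L) in Hy. apply HL.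
  pose proof (Rabs_triang y (r - y)) as Ht. rewrite Rplus_minus in Ht.
  rewrite Rabs_minus_sym in Hy. lra.
Qed.

Lemma inv_sq_decay_of_rapid_decay (f : R -> R) :
  (forall n m : nat, exists C, forall s, Rabs (s ^ m * Derive_n f n s) <= C) ->
  exists B, forall r, Rabs (f r) <= B / (1 + r ^ 2) /\
                      Rabs (Derive f r) * (1 + Rabs r) <= B / (1 + r ^ 2).
Proof.
  intros Hd.
  assert (Habs : forall n m, exists C, forall s, Rabs s ^ m * Rabs (Derive_n f n s) <= C).
  { intros n m. destruct (Hd n m) as [C HC]. exists C. intros s.
    rewrite RPow_abs, <- Rabs_mult. apply HC. }
  destruct (Habs 0%nat 0%nat) as [C00 H00]. destruct (Habs 0%nat 2%nat) as [C02 H02].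
  destruct (Habs 1%nat 0%nat) as [C10 H10]. destruct (Habs 1%nat 1%nat) as [C11 H11].
  destruct (Habs 1%nat 2%nat) as [C12 H12]. destruct (Habs 1%nat 3%nat) as [C13 H13].
  exists (C00 + C02 + C10 + C11 + C12 + C13). intros r.
  specialize (H00 r). specialize (H02 r). specialize (H10 r).
  specialize (H11 r). specialize (H12 r). specialize (H13 r). simpl in H00, H02, H10, H11, H12, H13.
  set (a := Rabs r) in *. set (h := Rabs (f r)) in *. set (d := Rabs (Derive f r)) in *.
  assert (0 <= a) by apply Rabs_pos. assert (0 <= h) by apply Rabs_pos.
  assert (0 <= d) by apply Rabs_pos.
  assert (Hr2 : r ^ 2 = a * a) by (unfold a; rewrite <- (pow2_abs r); ring).
  assert (Hc : 1 + a * a > 0) by nra.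
  assert (0 <= a * a * h) by (apply Rmult_le_pos; nra).
  assert (0 <= a * d) by (apply Rmult_le_pos; nra).
  assert (0 <= a * a * d) by (apply Rmult_le_pos; nra).
  assert (0 <= a * a * a * d) by (apply Rmult_le_pos; nra).
  rewrite Hr2. split; apply (Rle_div_r _ _ _ Hc); ring_simplify; lra.
Qed.

Lemma smooth_kernel_decay (H : R -> R) :
  smooth H ->
  (exists L, forall s, L < Rabs s -> H s = 0) \/
  (forall (n m : nat), exists C, forall s, Rabs (s ^ m * Derive_n H n s) <= C) ->
  exists B, forall r, Rabs (H r) <= B / (1 + r ^ 2) /\
                      Rabs (Derive H r) * (1 + Rabs r) <= B / (1 + r ^ 2).
Proof.
  intros Hs [[L HL] | Hd]; [| exact (inv_sq_decay_of_rapid_decay H Hd)].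
  destruct (inv_sq_decay_of_compact_support H L (fun r => smooth_continuity_pt H r Hs) HL)
    as [B1 HB1].
  destruct (inv_sq_decay_of_compact_support (Derive H) L
    (fun r => smooth_continuity_pt_Derive H r Hs)
              (Derive_eq_0_of_compact_support H L HL)) as [B2 HB2].
  exists (B1 + B2). intros r.
  assert (Hr : 0 < 1 + r ^ 2) by nra.
  specialize (HB1 r). specialize (HB2 r).
  pose proof (Rabs_pos r). pose proof (Rabs_pos (H r)). pose proof (Rabs_pos (Derive H r)).
  apply (Rle_div_r _ _ _ Hr) in HB1. apply (Rle_div_r _ _ _ Hr) in HB2.
  assert (0 <= Rabs (H r) * Rabs r * (1 + r ^ 2))
    by (apply Rmult_le_pos; [apply Rmult_le_pos|]; lra).
  assert (0 <= Rabs (H r) * (1 + Rabs r) * (1 + r ^ 2))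
    by (apply Rmult_le_pos; [apply Rmult_le_pos|]; lra).
  assert (0 <= Rabs (Derive H r) * (1 + Rabs r) * (1 + r ^ 2))
    by (apply Rmult_le_pos; [apply Rmult_le_pos|]; lra).
  split; apply (Rle_div_r _ _ _ Hr); [| lra].
  replace (Rabs (H r) * (1 + r ^ 2))
    with (Rabs (H r) * (1 + Rabs r) * (1 + r ^ 2) - Rabs (H r) * Rabs r * (1 + r ^ 2)) by ring.
  lra.
Qed.

Lemma div_one_plus_sq_scaled_le (z s Z X : R) : 0 < z <= Z -> 0 <= X ->
  X / (1 + (s / z) ^ 2) <= X * (1 + Z ^ 2) / (1 + s ^ 2).
Proof.
  intros Hz HX.
  assert (h1 : 0 < 1 + (s / z) ^ 2) by nra.
  assert (h2 : 0 < 1 + s ^ 2) by nra.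
  assert (key : 1 + s ^ 2 <= (1 + Z ^ 2) * (1 + (s / z) ^ 2)).
  { assert (e : (s / z) ^ 2 = s ^ 2 / z ^ 2) by (field; lra). rewrite e.
    assert (hzz : 0 < z ^ 2) by nra.
    apply Rmult_le_reg_r with (z ^ 2); auto.
    replace ((1 + Z ^ 2) * (1 + s ^ 2 / z ^ 2) * z ^ 2) with ((1 + Z ^ 2) * (z ^ 2 + s ^ 2))
      by (field; lra).
    assert (z ^ 2 <= Z ^ 2) by nra. nra. }
  unfold Rdiv. rewrite Rmult_assoc. apply Rmult_le_compat_l; auto.
  apply Rmult_le_reg_r with (1 + s ^ 2); auto.
  rewrite Rmult_assoc, Rinv_l by lra.
  apply Rmult_le_reg_l with (1 + (s / z) ^ 2); auto.
  rewrite <- Rmult_assoc, Rinv_r by lra. lra.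
Qed.

Lemma continuity_pt_Rmax_0 (tau : R) : continuity_pt (fun t => Rmax 0 t) tau.
Proof.
  apply continuity_pt_ext with (f := fun t => (t + Rabs t) / 2).
  { intros t. unfold Rmax. destruct (Rle_dec 0 t).
    - rewrite Rabs_pos_eq; [field | exact r].
    - rewrite Rabs_left by lra. field. }
  apply continuity_pt_mult; [| apply continuity_pt_const; intros ? ?; auto].
  apply continuity_pt_plus; [apply continuity_pt_id | apply Rcontinuity_abs].
Qed.

(* Extending [u] to negative times by [u(x, 0)] makes it continuous on the whole plane,
   as the parametric-integral lemmas require, without changing it for [t >= 0]. *)
Lemma continuity_2d_pt_clamp_time (u : R -> R -> R) :
  (forall x t, 0 <= t -> continuous (fun p : R * R => u (fst p) (snd p)) (x, t)) ->
  forall z tau, continuity_2d_pt (fun z tau => u z (Rmax 0 tau)) z tau.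
Proof.
  intros Hu z tau.
  apply (continuity_2d_pt_comp u (fun a _ => a) (fun _ b => Rmax 0 b)).
  - apply continuity_2d_pt_filterlim, Hu, Rmax_l.
  - apply continuity_2d_pt_id1.
  - apply continuity_2d_pt_of_pt_r, continuity_pt_Rmax_0.
Qed.

Lemma clamp_time_nonlocal_eq (u k : R -> R -> R) :
  (forall x t, 0 < t ->
     ex_RInt_gen (fun s => (u x t - u (x - s) t) * k x s) (at_point 0) (Rbar_locally p_infty) /\
     is_derive (fun tau => u x tau) t (- int0inf (fun s => (u x t - u (x - s) t) * k x s))) ->
  forall x t, 0 < t ->
    ex_RInt_gen (fun s => (u x (Rmax 0 t) - u (x - s) (Rmax 0 t)) * k x s)
      (at_point 0) (Rbar_locally p_infty) /\
    is_derive (fun tau => u x (Rmax 0 tau)) t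
      (- int0inf (fun s => (u x (Rmax 0 t) - u (x - s) (Rmax 0 t)) * k x s)).
Proof.
  intros Hu x t Ht. destruct (Hu x t Ht) as [Hex Hd].
  rewrite (Rmax_right 0 t) by lra. split; [exact Hex|].
  apply (is_derive_ext_loc (fun tau => u x tau)); [|exact Hd].
  apply (filter_imp (ball t (mkposreal t Ht))); [| apply locally_ball].
  intros tau Htau. change (Rabs (tau - t) < t) in Htau. apply Rabs_lt_between' in Htau.
  rewrite Rmax_right by lra. reflexivity.
Qed.

(* [(d/dx + d/ds) gamma (s, x)] at [x = y], i.e. the derivative of [fun y => gamma H zeta (y - z) y]
   at a point [y] with [y - z = s]. *)
Definition gamma_diag_deriv (H zeta : R -> R) (y s : R) : R :=
  -2 * Derive zeta y / (zeta y) ^ 3 * H (s / zeta y)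
  + Derive H (s / zeta y) * (zeta y - s * Derive zeta y) / (zeta y) ^ 4.

Section Gamma_kernel.

Variables (H zeta : R -> R) (delta : R).
Hypothesis H_smooth : smooth H.
Hypothesis H_decay :
  (exists L, forall s, L < Rabs s -> H s = 0) \/
  (forall (n m : nat), exists C, forall s, Rabs (s ^ m * Derive_n H n s) <= C).
Hypothesis zeta_smooth : smooth zeta.
Hypothesis zeta_bdd : bdd_fun zeta.
Hypothesis zeta'_bdd : bdd_fun (Derive zeta).
Hypothesis delta_pos : 0 < delta.
Hypothesis zeta_ge : forall x, delta <= zeta x.

Lemma zeta_pos y : 0 < zeta y.
Proof. specialize (zeta_ge y). lra. Qed.

Lemma continuity_2d_pt_scaled (f : R -> R) y s :
  (forall r, continuity_pt f r) -> continuity_2d_pt (fun y s => f (s / zeta y)) y s.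
Proof.
  intros Hf.
  apply (continuity_1d_2d_pt_comp f (fun y s => s / zeta y)); [apply Hf|].
  apply continuity_2d_pt_mult; [apply continuity_2d_pt_id2|].
  apply continuity_2d_pt_inv; [|apply Rgt_not_eq, zeta_pos].
  apply continuity_2d_pt_of_pt_l, smooth_continuity_pt, zeta_smooth.
Qed.

Lemma ex_derive_zeta y : ex_derive zeta y.
Proof. apply smooth_ex_derive, zeta_smooth. Qed.

Lemma ex_derive_Derive_zeta y : ex_derive (Derive zeta) y.
Proof. exact (zeta_smooth 2%nat y). Qed.

Lemma continuity_2d_pt_gamma y s : continuity_2d_pt (fun y s => gamma H zeta s y) y s.
Proof.
  pose proof (zeta_pos y). unfold gamma. apply continuity_2d_pt_mult.
  - apply continuity_2d_pt_of_pt_l, ex_derive_continuity_pt.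
    auto_derive. repeat split; try apply ex_derive_zeta.
    apply Rgt_not_eq; repeat apply Rmult_gt_0_compat; lra.
  - apply continuity_2d_pt_scaled. intros r. apply smooth_continuity_pt, H_smooth.
Qed.

Lemma continuity_2d_pt_gamma_diag_deriv y s : continuity_2d_pt (gamma_diag_deriv H zeta) y s.
Proof.
  pose proof (zeta_pos y). unfold gamma_diag_deriv, Rdiv.
  apply continuity_2d_pt_plus; apply continuity_2d_pt_mult.
  - apply continuity_2d_pt_of_pt_l, ex_derive_continuity_pt. auto_derive.
    repeat split; try apply ex_derive_Derive_zeta; try apply ex_derive_zeta.
    apply Rgt_not_eq; repeat apply Rmult_gt_0_compat; lra.
  - apply continuity_2d_pt_scaled. intros r. apply smooth_continuity_pt, H_smooth.
  - apply continuity_2d_pt_mult.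
    + apply continuity_2d_pt_scaled. intros r. apply smooth_continuity_pt_Derive, H_smooth.
    + apply continuity_2d_pt_minus;
        [apply continuity_2d_pt_of_pt_l, ex_derive_continuity_pt, ex_derive_zeta|].
      apply continuity_2d_pt_mult; [apply continuity_2d_pt_id2|].
      apply continuity_2d_pt_of_pt_l, ex_derive_continuity_pt, ex_derive_Derive_zeta.
  - apply continuity_2d_pt_of_pt_l, ex_derive_continuity_pt. auto_derive.
    repeat split; try apply ex_derive_zeta. apply Rgt_not_eq; repeat apply Rmult_gt_0_compat; lra.
Qed.

Lemma is_derive_gamma_diag (z y : R) :
  is_derive (fun y => gamma H zeta (y - z) y) y (gamma_diag_deriv H zeta y (y - z)).
Proof.
  pose proof (zeta_pos y). unfold gamma, gamma_diag_deriv.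
  auto_derive.
  - repeat split; try apply ex_derive_zeta; try apply smooth_ex_derive, H_smooth;
      apply Rgt_not_eq; repeat apply Rmult_gt_0_compat; lra.
  - change (Derive (fun x => zeta x)) with (Derive zeta).
    change (Derive (fun x => H x)) with (Derive H).
    unfold Rminus, Rdiv. field. lra.
Qed.

Lemma abs_gamma_le (B Z : R) :
  (forall y, zeta y <= Z) -> (forall r, Rabs (H r) <= B / (1 + r ^ 2)) -> 0 <= B ->
  forall s y, Rabs (gamma H zeta s y) <= B * (1 + Z ^ 2) / delta ^ 2 / (1 + s ^ 2).
Proof.
  intros HZ HB HB0 s y. unfold gamma.
  pose proof (zeta_ge y). pose proof (HZ y).
  rewrite Rabs_mult, Rabs_inv, <- RPow_abs, (Rabs_pos_eq (zeta y)) by lra.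
  assert (hr := div_one_plus_sq_scaled_le (zeta y) s Z B ltac:(lra) HB0).
  assert (hH := HB (s / zeta y)).
  assert (hs : 0 < 1 + s ^ 2) by nra.
  assert (hz2 : delta ^ 2 <= zeta y ^ 2) by (apply pow_incr; lra).
  assert (hd2 : 0 < delta ^ 2) by nra.
  apply Rle_trans with (/ delta ^ 2 * (B * (1 + Z ^ 2) / (1 + s ^ 2))).
  - apply Rmult_le_compat; [left; apply Rinv_0_lt_compat; nra | apply Rabs_pos | |lra].
    apply Rinv_le_contravar; auto.
  - right. field. lra.
Qed.

Lemma abs_gamma_diag_deriv_le (B Z Z1 : R) :
  (forall y, zeta y <= Z) -> (forall y, Rabs (Derive zeta y) <= Z1) ->
  (forall r, Rabs (H r) <= B / (1 + r ^ 2) /\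
    Rabs (Derive H r) * (1 + Rabs r) <= B / (1 + r ^ 2)) ->
  0 <= B ->
  forall y s, Rabs (gamma_diag_deriv H zeta y s)
              <= (3 * Z1 + 1) * (B * (1 + Z ^ 2)) / delta ^ 3 / (1 + s ^ 2).
Proof.
  intros HZ HZ1 HB HB0 y s.
  pose proof (zeta_ge y). pose proof (HZ y).
  set (zy := zeta y) in *. set (zd := Derive zeta y). set (r := s / zy).
  assert (Z10 : 0 <= Z1) by (eapply Rle_trans; [apply Rabs_pos | apply (HZ1 0)]).
  assert (E : gamma_diag_deriv H zeta y s = / zy ^ 3 * (-2 * zd * H r + Derive H r * (1 - r * zd))).
  { unfold gamma_diag_deriv. fold zy zd r. unfold r. field. lra. }
  rewrite E.
  set (X := B / (1 + r ^ 2)).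
  assert (hX : X <= B * (1 + Z ^ 2) / (1 + s ^ 2)) by (apply div_one_plus_sq_scaled_le; lra).
  destruct (HB r) as [hH hD]. fold X in hH, hD.
  assert (hzd : Rabs zd <= Z1) by apply HZ1.
  assert (inner : Rabs (-2 * zd * H r + Derive H r * (1 - r * zd)) <= (3 * Z1 + 1) * X).
  { eapply Rle_trans; [apply Rabs_triang|]. rewrite !Rabs_mult.
    replace (Rabs (-2)) with 2 by (rewrite Rabs_left; lra).
    assert (h1 : Rabs (1 - r * zd) <= (1 + Z1) * (1 + Rabs r)).
    { eapply Rle_trans; [apply Rabs_triang|]. rewrite Rabs_Ropp, Rabs_mult, Rabs_R1.
      pose proof (Rabs_pos r). pose proof (Rabs_pos zd). nra. }
    assert (hA : 2 * Rabs zd * Rabs (H r) <= 2 * Z1 * X).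
    { pose proof (Rabs_pos zd). pose proof (Rabs_pos (H r)). nra. }
    assert (hB : Rabs (Derive H r) * Rabs (1 - r * zd) <= (1 + Z1) * X).
    { pose proof (Rabs_pos (Derive H r)). pose proof (Rabs_pos r).
      apply Rle_trans with (Rabs (Derive H r) * ((1 + Z1) * (1 + Rabs r)));
        [apply Rmult_le_compat_l; auto|].
      nra. }
    lra. }
  rewrite Rabs_mult, Rabs_inv, <- RPow_abs, (Rabs_pos_eq zy) by lra.
  assert (hz3 : delta ^ 3 <= zy ^ 3) by (apply pow_incr; lra).
  assert (hd3 : 0 < delta ^ 3) by (apply pow_lt; lra).
  assert (hX0 : 0 <= X) by (unfold X; apply Rdiv_le_0_compat; nra).
  apply Rle_trans with (/ delta ^ 3 * ((3 * Z1 + 1) * (B * (1 + Z ^ 2) / (1 + s ^ 2)))).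
  - apply Rmult_le_compat; [left; apply Rinv_0_lt_compat; nra | apply Rabs_pos | |].
    + apply Rinv_le_contravar; auto.
    + eapply Rle_trans; [exact inner|]. apply Rmult_le_compat_l; lra.
  - right. assert (0 < 1 + s ^ 2) by nra. field. split; lra.
Qed.

Lemma gamma_decay : exists B, forall y s,
  Rabs (gamma H zeta s y) <= B / (1 + s ^ 2) /\
  Rabs (gamma_diag_deriv H zeta y s) <= B / (1 + s ^ 2).
Proof.
  destruct (smooth_kernel_decay H H_smooth H_decay) as [B HB].
  destruct zeta_bdd as [Z HZ]. destruct zeta'_bdd as [Z1 HZ1].
  assert (HZ' : forall y, zeta y <= Z) by (intros y; eapply Rle_trans; [apply Rle_abs | apply HZ]).
  assert (HB0 : 0 <= B).
  { destruct (HB 0) as [HB00 _]. pose proof (Rabs_pos (H 0)).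
    replace (B / (1 + 0 ^ 2)) with B in HB00 by field. lra. }
  assert (Z10 : 0 <= Z1) by (eapply Rle_trans; [apply Rabs_pos | apply (HZ1 0)]).
  set (B1 := B * (1 + Z ^ 2) / delta ^ 2).
  set (B2 := (3 * Z1 + 1) * (B * (1 + Z ^ 2)) / delta ^ 3).
  assert (HBZ : 0 <= B * (1 + Z ^ 2))
    by (apply Rmult_le_pos; [lra | pose proof (pow2_ge_0 Z); lra]).
  assert (0 <= B1) by (unfold B1; apply Rdiv_le_0_compat; [exact HBZ | apply pow_lt; lra]).
  assert (0 <= B2) by (unfold B2; apply Rdiv_le_0_compat;
    [apply Rmult_le_pos; lra | apply pow_lt; lra]).
  exists (B1 + B2). intros y s.
  assert (Hs : 0 < / (1 + s ^ 2)) by (apply Rinv_0_lt_compat; nra).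
  pose proof (abs_gamma_le B Z HZ' (fun r => proj1 (HB r)) HB0 s y) as Hg.
  pose proof (abs_gamma_diag_deriv_le B Z Z1 HZ' HZ1 HB HB0 y s) as Hgd.
  fold B1 in Hg. fold B2 in Hgd. unfold Rdiv in Hg, Hgd |- *.
  assert (0 <= B1 * / (1 + s ^ 2)) by (apply Rmult_le_pos; lra).
  assert (0 <= B2 * / (1 + s ^ 2)) by (apply Rmult_le_pos; lra).
  split; rewrite Rmult_plus_distr_r; lra.
Qed.

Lemma is_RInt_gen_gamma : exists c, forall y,
  is_RInt_gen (fun s => gamma H zeta s y) (at_point 0) (Rbar_locally p_infty) (c / zeta y).
Proof.
  destruct (smooth_kernel_decay H H_smooth H_decay) as [B HB].
  assert (HHc : forall r, continuity_pt H r) by (intros; apply smooth_continuity_pt, H_smooth).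
  destruct (filterlim_RInt_inv_sq_decay H B (fun a b => ex_RInt_continuity_pt H a b HHc)
              (fun s _ => proj1 (HB s))) as [c Hc].
  exists c. intros y. pose proof (zeta_pos y) as hz.
  apply is_RInt_gen_of_filterlim.
  { intros b. apply ex_RInt_continuity_pt. intros s.
    apply (continuity_pt_comp_2d (fun a s => gamma H zeta s a) (fun _ => y) (fun s => s));
      [apply continuity_2d_pt_gamma | apply continuity_pt_const; intros ? ?; auto
        | apply continuity_pt_id]. }
  set (l := / zeta y). assert (hl : 0 < l) by (apply Rinv_0_lt_compat, hz).
  apply (filterlim_ext (fun b => l * RInt H 0 (l * b))).
  { intros b.
    assert (Hlin := RInt_comp_lin H l 0 0 b).
    assert (Hex := ex_RInt_comp_lin H l 0 0 b).
    replace (l * 0 + 0) with 0 in Hlin, Hex by ring.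
    replace (l * b + 0) with (l * b) in Hlin, Hex by ring.
    rewrite <- Hlin by (apply ex_RInt_continuity_pt, HHc).
    change (scal l (RInt (fun s => scal l (H (l * s + 0))) 0 b)
            = RInt (fun s => gamma H zeta s y) 0 b).
    rewrite <- (RInt_scal _ 0 b l) by (apply Hex, ex_RInt_continuity_pt, HHc).
    apply RInt_ext. intros s _. unfold gamma, l, scal; simpl; unfold mult; simpl.
    replace (/ zeta y * s + 0) with (s / zeta y) by (unfold Rdiv; ring). field. lra. }
  replace (c / zeta y) with (l * c) by (unfold l, Rdiv; ring).
  apply (filterlim_comp _ _ _ (fun b => RInt H 0 (l * b)) (fun x => l * x) _ (locally c)).
  - apply (filterlim_comp _ _ _ (fun b => l * b) (fun b => RInt H 0 b) _ (Rbar_locally p_infty));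
      [|exact Hc].
    intros P [N HN]. exists (N / l). intros b Hb. apply HN.
    apply Rmult_lt_compat_l with (r := l) in Hb; [|exact hl].
    replace (l * (N / l)) with N in Hb by (field; lra). exact Hb.
  - apply (proj1 (continuity_pt_filterlim (fun x => l * x) c)).
    apply continuity_pt_mult; [apply continuity_pt_const; intros ? ?; auto
      | apply continuity_pt_id].
Qed.

Lemma const_div_zeta_regular (c : R) :
  is_C1 (fun y => c / zeta y) /\ bdd_fun (fun y => c / zeta y) /\
    bdd_fun (Derive (fun y => c / zeta y)).
Proof.
  assert (Hd : forall y, is_derive (fun y => c / zeta y) y (- c * Derive zeta y / (zeta y) ^ 2)).
  { intros y. pose proof (zeta_pos y). auto_derive.
    - split; [apply ex_derive_zeta | lra].
    - change (Derive (fun x => zeta x)) with (Derive zeta). field. lra. }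
  assert (HD : forall y, Derive (fun y => c / zeta y) y = - c * Derive zeta y / (zeta y) ^ 2)
    by (intros; apply is_derive_unique, Hd).
  destruct zeta'_bdd as [Z1 HZ1].
  split; [|split].
  - intros y. split; [eexists; apply Hd|].
    apply continuity_pt_ext with (f := fun y => - c * Derive zeta y / (zeta y) ^ 2);
      [intros; symmetry; apply HD|].
    apply ex_derive_continuity_pt. pose proof (zeta_pos y). auto_derive.
    repeat split; try apply ex_derive_Derive_zeta; try apply ex_derive_zeta.
    apply Rgt_not_eq; repeat apply Rmult_gt_0_compat; lra.
  - exists (Rabs c / delta). intros y. pose proof (zeta_pos y). pose proof (zeta_ge y).
    unfold Rdiv. rewrite Rabs_mult, Rabs_inv, (Rabs_pos_eq (zeta y)) by lra.
    apply Rmult_le_compat_l; [apply Rabs_pos | apply Rinv_le_contravar; lra].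
  - exists (Rabs c * Z1 / delta ^ 2). intros y. rewrite HD. pose proof (zeta_pos y).
    pose proof (zeta_ge y).
    unfold Rdiv. rewrite !Rabs_mult, Rabs_inv, <- RPow_abs, Rabs_Ropp, (Rabs_pos_eq (zeta y))
      by lra.
    apply Rmult_le_compat; [apply Rmult_le_pos; apply Rabs_pos
      | left; apply Rinv_0_lt_compat, pow_lt; lra | |].
    + apply Rmult_le_compat_l; [apply Rabs_pos | apply HZ1].
    + apply Rinv_le_contravar; [apply pow_lt; lra | apply pow_incr; lra].
Qed.

Variables (u : R -> R -> R) (M : R).
Hypothesis u_cont : forall x t, 0 <= t -> continuous (fun p : R * R => u (fst p) (snd p)) (x, t).
Hypothesis u_bdd : forall x t, 0 <= t -> Rabs (u x t) <= M.
Hypothesis u_eq : forall x t, 0 < t ->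
  ex_RInt_gen (fun s => (u x t - u (x - s) t) * gamma H zeta s x) (at_point 0)
    (Rbar_locally p_infty) /\
  is_derive (fun tau => u x tau) t (- int0inf (fun s => (u x t - u (x - s) t) * gamma H zeta s x)).

Lemma duhamel_C1_gamma (t : R) : 0 <= t -> exists c,
  (forall y, kfun H zeta y = c / zeta y) /\
  is_C1 (fun y => exp (c / zeta y * t) * u y (Rmax 0 t) - u y (Rmax 0 0)).
Proof.
  intros Ht.
  destruct gamma_decay as [B HB]. destruct is_RInt_gen_gamma as [c Hc].
  destruct (const_div_zeta_regular c) as [HK_C1 [HK_bdd HDK_bdd]].
  exists c. split; [intros y; apply is_RInt_gen_unique, Hc|].
  apply (duhamel_C1 _ (fun z tau => u z (Rmax 0 tau)) (fun y s => gamma H zeta s y)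
           (gamma_diag_deriv H zeta) t M B B); try assumption.
  - apply continuity_2d_pt_clamp_time, u_cont.
  - intros z tau. apply u_bdd, Rmax_l.
  - apply continuity_2d_pt_gamma.
  - intros y s. apply HB.
  - apply continuity_2d_pt_gamma_diag_deriv.
  - intros y s. apply HB.
  - apply is_derive_gamma_diag.
  - apply (clamp_time_nonlocal_eq u (fun x s => gamma H zeta s x) u_eq).
Qed.

End Gamma_kernel.
Theorem theorem2
  (H zeta psi0 : R -> R) (delta_m : R) (u : R -> R -> R) (pts : list R)
  (* kernel H *)
  (H_smooth : smooth H)
  (H_bdd : bdd_fun H)
  (H_even : forall s, H (- s) = H s)
  (H_nonneg : forall s, 0 <= H s)
  (H_moment : is_RInt_gen (fun s => s * H s) (at_point 0) (Rbar_locally p_infty) 1)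
  (H_decay :
     (exists L, forall s, L < Rabs s -> H s = 0) \/
     (forall (n m : nat), exists C, forall s, Rabs (s ^ m * Derive_n H n s) <= C))
  (* horizon zeta *)
  (zeta_bdd : bdd_fun zeta)
  (zeta_smooth : smooth zeta)
  (zeta'_bdd : bdd_fun (Derive zeta))
  (delta_pos : 0 < delta_m)
  (zeta_ge : forall x, delta_m <= zeta x)
  (zeta_min : exists x0, zeta x0 = delta_m)
  (* initial datum psi0 *)
  (psi0_cont : forall x, continuous psi0 x)
  (psi0_bdd : bdd_fun psi0)
  (psi0_smooth : forall n x, ~ In x pts -> ex_derive_n psi0 n x)
  (psi0'_bdd : exists M, forall x, ~ In x pts -> Rabs (Derive psi0 x) <= M)
  (psi0'_jumps : forall x, exists j, is_jump (Derive psi0) x j)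
  (* u is the (bounded, continuous) solution *)
  (u_cont : forall x t, 0 <= t -> continuous (fun p : R * R => u (fst p) (snd p)) (x, t))
  (u_bdd : exists M, forall x t, 0 <= t -> Rabs (u x t) <= M)
  (u_init : forall x, u x 0 = psi0 x)
  (u_eq : forall x t, 0 < t ->
     ex_RInt_gen (fun s => (u x t - u (x - s) t) * gamma H zeta s x)
       (at_point 0) (Rbar_locally p_infty) /\
     is_derive (fun tau => u x tau) t
       (- int0inf (fun s => (u x t - u (x - s) t) * gamma H zeta s x))) :
  forall x t, 0 <= t -> forall j, is_jump (Derive psi0) x j ->
    is_jump (fun y => Derive (fun z => u z t) y) x (exp (- kfun H zeta x * t) * j)
    /\ is_jump (fun y => Derive (fun z => u z 0) y) x j.
Proof.
  intros x t Ht j Hj.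
  split; [| apply (is_jump_ext_punctured (Derive psi0)); [| exact Hj];
            apply filter_forall; intros y _; apply Derive_ext; intros z; symmetry; apply u_init].
  destruct u_bdd as [M HM].
  destruct (duhamel_C1_gamma H zeta delta_m H_smooth H_decay zeta_smooth zeta_bdd zeta'_bdd
              delta_pos zeta_ge u M u_cont HM u_eq t Ht) as [c [Hk HV]].
  destruct (const_div_zeta_regular zeta delta_m zeta_smooth zeta'_bdd delta_pos zeta_ge c)
    as [HK_C1 _].
  rewrite Hk.
  set (g := fun z => exp (- (c / zeta z) * t)).
  set (V := fun z => exp (c / zeta z * t) * u z (Rmax 0 t) - u z (Rmax 0 0)).
  apply (is_jump_ext_punctured (Derive (fun z => g z * (psi0 z + V z)))
    (fun y => Derive (fun z => u z t) y) x).
  { apply filter_forall. intros y _. apply Derive_ext. intros z. unfold g, V.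
    rewrite Rmax_right, Rmax_left, u_init by lra.
    rewrite Rplus_minus, <- Rmult_assoc, <- exp_plus.
    replace (- (c / zeta z) * t + c / zeta z * t) with 0 by ring. rewrite exp_0. ring. }
  apply (is_jump_Derive_mult_plus g psi0 V);
    [apply is_C1_exp_opp_mult, HK_C1 | exact HV | | | exact Hj].
  - apply continuity_pt_filterlim, psi0_cont.
  - generalize (locally_not_In pts x). apply filter_imp. intros y Hy Hyx.
    exact (psi0_smooth 1%nat y (Hy Hyx)).
Qed.
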